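(* Let $l:\mathcal{Y}\times\mathbb{R}\to\mathbb{R}$ be differentiable in its second argument with $|\partial_2 l(y,s)|\le\Lambda$ for all $y\in\mathcal{Y}$, $s\in\mathbb{R}$. Let $(y,z)$ and $(y',z')$ be independent, identically distributed random pairs with values in $\mathcal{Y}\times\mathbb{R}^n$ and $\mathbb{E}\|z\|^2<\infty$, and let $x,x'\in\mathbb{R}^n$ be (possibly random) vectors independent of $(y,z),(y',z')$. Then $$\mathbb{E}_{y,z,y',z'}\Big[\big\langle \nabla_x l(y,\langle z,x\rangle),\,\nabla_x l(y',\langle z',x'\rangle)\big\rangle\Big]\le \Lambda^2\,\big\|\mathbb{E}_{z}[z z^\top]\big\|_{\mathrm{Frob}}=:L^2\alpha,$$ where $\nabla_x l(y,\langle z,x\rangle)=z\,\partial_2 l(y,\langle z,x\rangle)$ and $\|\cdot\|_{\mathrm{Frob}}$ is the Frobenius norm.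
   Context: $L>0$ is the bound on gradient norms of the losses, and the equality $L^2\alpha=\Lambda^2\|\mathbb{E}[zz^\top]\|_{\mathrm{Frob}}$ defines the correlation factor $\alpha$. *)

From HB Require Import structures.
From mathcomp Require Import all_boot all_order all_algebra.
From mathcomp Require Import all_classical all_reals all_analysis.
Set Implicit Arguments. Unset Strict Implicit. Unset Printing Implicit Defensive.
Import Order.TTheory GRing.Theory Num.Theory.
Local Open Scope ring_scope.

Definition dotv (R : realType) (n : nat) (u v : 'I_n -> R) : R :=
  \sum_(i < n) u i * v i.

Definition frob_norm (R : realType) (n : nat) (M : 'M[R]_n) : R :=
  Num.sqrt (\sum_(i < n) \sum_(j < n) M i j ^+ 2).

Definition second_moment (d : measure_display) (T : measurableType d)
  (R : realType) (P : probability T R) (n : nat) (Z : T -> 'I_n -> R) : 'M[R]_n :=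
  \matrix_(i < n, j < n) Rintegral P setT (fun t => Z t i * Z t j).

(* Write g, g' for the derivative of the loss at <z, x> and <z, x'>, and put
   a_i = E[z_i g], b_i = E[z_i g'].  As the two samples are independent, Fubini
   turns the left-hand side into <a, b> <= (|a|^2 + |b|^2) / 2, so it suffices to
   show |a|^2 <= Lam^2 |E[z z^T]|_F.  For h = <a, z> we have |a|^2 = E[h g], and
   by Cauchy-Schwarz
     |a|^4 <= E[h^2] E[g^2] <= (a^T E[z z^T] a) Lam^2 <= |a|^2 |E[z z^T]|_F Lam^2,
   the last step being Cauchy-Schwarz for the Frobenius inner product. *)

From HB Require Import structures.
From mathcomp Require Import all_boot all_order all_algebra.
From mathcomp Require Import all_classical all_reals all_analysis.
From mathcomp Require Import ring lra measurable_realfun.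
Set Implicit Arguments.
Unset Strict Implicit.
Unset Printing Implicit Defensive.

Import Order.TTheory GRing.Theory Num.Theory.
Local Open Scope ring_scope.

Lemma discriminant_le (R : realFieldType) (U Q V : R) :
  0 <= U -> (forall t, 2 * t * Q <= t ^+ 2 * U + V) -> Q ^+ 2 <= U * V.
Proof.
move=> U_ge0 quad_ge0; have [U0|U_neq0] := eqVneq U 0.
  have [->|Q_neq0] := eqVneq Q 0; first by rewrite U0 expr0n mul0r.
  have := quad_ge0 ((`|V| + 1) / (2 * Q)); rewrite U0 mulr0 add0r.
  have -> : 2 * ((`|V| + 1) / (2 * Q)) * Q = `|V| + 1 by field.
  by have := ler_norm V; lra.
have U_gt0 : 0 < U by rewrite lt_def U_neq0.
have := quad_ge0 (Q / U).
have -> : 2 * (Q / U) * Q = 2 * (Q ^+ 2 / U) by field.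
have -> : (Q / U) ^+ 2 * U = Q ^+ 2 / U by field.
by move=> ?; rewrite -ler_pdivrMl //; lra.
Qed.

Lemma cauchy_schwarz_sum (R : realFieldType) (I : finType) (u v : I -> R) :
  (\sum_i u i * v i) ^+ 2 <= (\sum_i u i ^+ 2) * (\sum_i v i ^+ 2).
Proof.
apply: discriminant_le; first by apply: sumr_ge0 => i _; exact: sqr_ge0.
move=> t; rewrite !mulr_sumr -big_split /=; apply: ler_sum => i _.
by have := sqr_ge0 (t * u i - v i); rewrite !expr2; lra.
Qed.

Lemma quadform_le_frob_norm (R : realType) n (a : 'I_n -> R) (M : 'M[R]_n) :
  \sum_i \sum_j a i * a j * M i j <= (\sum_i a i ^+ 2) * frob_norm M.
Proof.
have sum_sqr_ge0 (I : finType) (u : I -> R) : 0 <= \sum_i u i ^+ 2.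
  by apply: sumr_ge0 => i _; exact: sqr_ge0.
rewrite pair_bigA /=; set Q := \sum_p _.
have := cauchy_schwarz_sum (fun p : 'I_n * 'I_n => a p.1 * a p.2)
                           (fun p => M p.1 p.2).
have -> : \sum_(p : 'I_n * 'I_n) (a p.1 * a p.2) ^+ 2 = (\sum_i a i ^+ 2) ^+ 2.
  rewrite expr2 mulr_suml; under [RHS]eq_bigr do rewrite mulr_sumr.
  by rewrite pair_bigA; apply: eq_bigr => p _; rewrite exprMn.
have -> : \sum_(p : 'I_n * 'I_n) M p.1 p.2 ^+ 2 = frob_norm M ^+ 2.
  by rewrite /frob_norm pair_bigA sqr_sqrtr ?sum_sqr_ge0.
rewrite -exprMn -/Q => cs.
apply: le_trans (real_ler_norm (num_real Q)) _.
by rewrite -ler_sqr ?nnegrE ?mulr_ge0 ?sqrtr_ge0 // real_normK ?num_real.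
Qed.

Section real_integral.
Context d (T : measurableType d) (R : realType) (mu : {measure set T -> \bar R}).

Lemma integrable_fsum (I : finType) (f : I -> T -> R) :
  (forall i, mu.-integrable setT (EFin \o f i)) ->
  mu.-integrable setT (EFin \o (fun x => \sum_i f i x)).
Proof.
move=> intf; apply: (eq_integrable measurableT (fun x => \sum_i (f i x)%:E)).
  by move=> x _; rewrite /= sumEFin.
by apply: (integrable_sum measurableT) => i _; exact: intf.
Qed.

Lemma Rintegral_fsum (I : finType) (f : I -> T -> R) :
  (forall i, mu.-integrable setT (EFin \o f i)) ->
  \int[mu]_x (\sum_i f i x) = \sum_i \int[mu]_x f i x.
Proof.
move=> intf; rewrite /Rintegral.
under eq_integral do rewrite -sumEFin.
rewrite integral_sum // -EFin_sum_fine //= => i _.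
exact: (integrable_fin_num measurableT (intf i)).
Qed.

Lemma integrable_mul_of_sqr (f g : T -> R) :
  measurable_fun setT f -> measurable_fun setT g ->
  mu.-integrable setT (EFin \o (fun x => f x ^+ 2)) ->
  mu.-integrable setT (EFin \o (fun x => g x ^+ 2)) ->
  mu.-integrable setT (EFin \o (fun x => f x * g x)).
Proof.
move=> mf mg if2 ig2.
apply: (le_integrable measurableT _ _ (integrableD measurableT if2 ig2)).
  by apply/measurable_EFinP; exact: measurable_funM.
move=> x _ /=; rewrite lee_fin [X in _ <= X]ger0_norm ?addr_ge0 ?sqr_ge0 // normrM.
rewrite -(real_normK (num_real (f x))) -(real_normK (num_real (g x))).
by have := normr_ge0 (f x); have := normr_ge0 (g x); rewrite !expr2; nra.
Qed.

Lemma Rintegral_cauchy_schwarz (f g : T -> R) :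
  measurable_fun setT f -> measurable_fun setT g ->
  mu.-integrable setT (EFin \o (fun x => f x ^+ 2)) ->
  mu.-integrable setT (EFin \o (fun x => g x ^+ 2)) ->
  (\int[mu]_x (f x * g x)) ^+ 2 <= \int[mu]_x (f x ^+ 2) * \int[mu]_x (g x ^+ 2).
Proof.
move=> mf mg if2 ig2; have ifg := integrable_mul_of_sqr mf mg if2 ig2.
apply: discriminant_le => [|t]; first by apply: Rintegral_ge0 => x _; exact: sqr_ge0.
have it2f2 := integrableZl measurableT (t ^+ 2) if2.
rewrite -!RintegralZl // -RintegralD //.
apply: le_Rintegral => //; first exact: (integrableZl measurableT (2 * t) ifg).
  exact: (integrableD measurableT it2f2 ig2).
by move=> x _; have := sqr_ge0 (t * f x - g x); rewrite !expr2; lra.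
Qed.

End real_integral.

Section product_integral.
Context d1 d2 (T1 : measurableType d1) (T2 : measurableType d2) (R : realType).
Variables (m1 : {sigma_finite_measure set T1 -> \bar R})
          (m2 : {sigma_finite_measure set T2 -> \bar R}).
Variables (f : T1 -> R) (g : T2 -> R).
Hypotheses (intf : m1.-integrable setT (EFin \o f))
           (intg : m2.-integrable setT (EFin \o g)).

Lemma integrable_prod_mul :
  (m1 \x m2)%E.-integrable setT (EFin \o (fun z => f z.1 * g z.2)).
Proof.
have mf : measurable_fun setT f.
  by apply/measurable_EFinP; exact: measurable_int intf.
have mg : measurable_fun setT g.
  by apply/measurable_EFinP; exact: measurable_int intg.
have mfg : measurable_fun setT (EFin \o (fun z : T1 * T2 => f z.1 * g z.2)).
  apply/measurable_EFinP; apply: measurable_funM.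
    exact: measurableT_comp mf measurable_fst.
  exact: measurableT_comp mg measurable_snd.
apply/(integrable12ltyP m1 m2 mfg) => /=.
under eq_integral do under eq_integral do rewrite normrM EFinM.
have mnf : measurable_fun setT (fun x => `|f x|%:E).
  by apply/measurable_EFinP; exact: measurableT_comp.
have mng : measurable_fun setT (fun y => `|g y|%:E).
  by apply/measurable_EFinP; exact: measurableT_comp.
under eq_integral do rewrite ge0_integralZl //.
rewrite ge0_integralZr //; last exact: integral_ge0.
case/integrableP: intf => _ intf_lty; case/integrableP: intg => _ intg_lty.
rewrite lte_mul_pinfty //; first exact: integral_ge0.
by rewrite ge0_fin_numE //; exact: integral_ge0.
Qed.

Lemma Rintegral_prod_mul :
  \int[(m1 \x m2)%E]_z (f z.1 * g z.2) = \int[m1]_x f x * \int[m2]_y g y.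
Proof.
rewrite /Rintegral -(integral12_prod_meas1 integrable_prod_mul) /fubini_F /=.
have gfin := integrable_fin_num measurableT intg.
have ffin := integrable_fin_num measurableT intf.
under eq_integral do under eq_integral do rewrite EFinM.
under eq_integral do rewrite (integralZl measurableT intg).
by rewrite -(fineK gfin) (integralZr measurableT intf) -(fineK ffin).
Qed.

End product_integral.

Section second_moment_bound.
Context d (T : measurableType d) (R : realType) (P : probability T R) (n : nat).
Variable Z : T -> 'I_n -> R.
Hypothesis mZ : forall i, measurable_fun setT (fun t => Z t i).
Hypothesis int_sqr_norm : P.-integrable setT (fun t => (\sum_i Z t i ^+ 2)%:E).

Lemma integrable_coord_sqr i : P.-integrable setT (EFin \o (fun t => Z t i ^+ 2)).
Proof.
apply: (le_integrable measurableT _ _ int_sqr_norm).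
  by apply/measurable_EFinP; exact: measurable_funX.
move=> t _ /=; rewrite lee_fin !ger0_norm ?sqr_ge0 ?sumr_ge0 // => [|k _].
  by rewrite (bigD1 i) //= lerDl sumr_ge0 // => k _; exact: sqr_ge0.
exact: sqr_ge0.
Qed.

Variables (g : T -> R) (Lam : R).
Hypotheses (mg : measurable_fun setT g) (g_le : forall t, `|g t| <= Lam).

Let sqr_le t : g t ^+ 2 <= Lam ^+ 2.
Proof. by rewrite -real_normK ?num_real // lerXn2r ?nnegrE // (le_trans _ (g_le t)). Qed.

Lemma integrable_bounded_sqr : P.-integrable setT (EFin \o (fun t => g t ^+ 2)).
Proof.
apply: (le_integrable measurableT _ _
          (finite_measure_integrable_cst P (Lam ^+ 2) measurableT)).
  by apply/measurable_EFinP; exact: measurable_funX.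
move=> t _ /=; rewrite lee_fin !ger0_norm ?sqr_ge0 //; exact: sqr_le.
Qed.

Lemma Rintegral_bounded_sqr_le : \int[P]_t (g t ^+ 2) <= Lam ^+ 2.
Proof.
rewrite -[leRHS]mulr1 -[1]/(fine 1%E) -(probability_setT P) -Rintegral_cst //.
apply: le_Rintegral => //; first exact: integrable_bounded_sqr.
exact: finite_measure_integrable_cst.
Qed.

Lemma sum_sqr_Rintegral_mul_le :
  \sum_i (\int[P]_t (Z t i * g t)) ^+ 2 <= Lam ^+ 2 * frob_norm (second_moment P Z).
Proof.
set a := fun i => \int[P]_t (Z t i * g t); set A := \sum_i a i ^+ 2.
pose h t := \sum_i a i * Z t i.
have int_Zg i := integrable_mul_of_sqr (mZ i) mg (integrable_coord_sqr i)
                                       integrable_bounded_sqr.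
have int_ZZ i j := integrable_mul_of_sqr (mZ i) (mZ j)
                     (integrable_coord_sqr i) (integrable_coord_sqr j).
have h_sqrE : (fun t => h t ^+ 2) =
    (fun t => \sum_(p : 'I_n * 'I_n) a p.1 * a p.2 * (Z t p.1 * Z t p.2)).
  apply/boolp.funext => t; rewrite expr2 mulr_suml.
  under eq_bigr do rewrite mulr_sumr.
  by rewrite pair_bigA; apply: eq_bigr => p _; rewrite mulrACA.
have int_aZZ (p : 'I_n * 'I_n) :=
  integrableZl measurableT (a p.1 * a p.2) (int_ZZ p.1 p.2).
have hgE : \int[P]_t (h t * g t) = A.
  under eq_Rintegral do rewrite mulr_suml.
  under eq_Rintegral do under eq_bigr do rewrite -mulrA.
  rewrite Rintegral_fsum => [|i]; last exact: (integrableZl measurableT (a i) (int_Zg i)).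
  by apply: eq_bigr => i _; rewrite RintegralZl // expr2.
have hhE : \int[P]_t (h t ^+ 2) = \sum_i \sum_j a i * a j * second_moment P Z i j.
  rewrite h_sqrE (Rintegral_fsum int_aZZ) pair_bigA.
  by apply: eq_bigr => p _; rewrite RintegralZl // mxE.
have cs : A ^+ 2 <= \int[P]_t (h t ^+ 2) * \int[P]_t (g t ^+ 2).
  rewrite -hgE; apply: Rintegral_cauchy_schwarz => //.
  - by apply: measurable_sum => i; apply: measurable_funM => //; exact: measurable_cst.
  - by rewrite h_sqrE; exact: integrable_fsum int_aZZ.
  - exact: integrable_bounded_sqr.
have hh_ge0 : 0 <= \int[P]_t (h t ^+ 2) by apply: Rintegral_ge0 => t _; exact: sqr_ge0.
have A_ge0 : 0 <= A by apply: sumr_ge0 => i _; exact: sqr_ge0.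
have hh_le := quadform_le_frob_norm a (second_moment P Z); rewrite -hhE -/A in hh_le.
have F_ge0 : 0 <= frob_norm (second_moment P Z) by exact: sqrtr_ge0.
have A_sqr_le : A * A <= A * (Lam ^+ 2 * frob_norm (second_moment P Z)).
  rewrite -expr2; apply: (le_trans cs).
  apply: le_trans (ler_wpM2l hh_ge0 Rintegral_bounded_sqr_le) _.
  by have := ler_wpM2r (sqr_ge0 Lam) hh_le; lra.
have := mulr_ge0 (sqr_ge0 Lam) F_ge0; nra.
Qed.

End second_moment_bound.

Theorem lemma5 (R : realType) (Ycal : Type) (l : Ycal -> R -> R) (Lam : R)
  (n : nat) (d : measure_display) (T : measurableType d) (P : probability T R)
  (Y : T -> Ycal) (Z : T -> 'I_n -> R) (x x' : 'I_n -> R) :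
  (forall y s, derivable (l y) s 1) ->
  (forall y s, `| derive1 (l y) s | <= Lam) ->
  (forall i, measurable_fun setT (fun t => Z t i)) ->
  (forall w : 'I_n -> R,
      measurable_fun setT (fun t => derive1 (l (Y t)) (dotv (Z t) w))) ->
  P.-integrable setT (fun t => (\sum_(i < n) Z t i ^+ 2)%:E) ->
  Rintegral (P \x P)%E setT
    (fun tt : T * T =>
       dotv (fun i => Z tt.1 i * derive1 (l (Y tt.1)) (dotv (Z tt.1) x))
            (fun i => Z tt.2 i * derive1 (l (Y tt.2)) (dotv (Z tt.2) x')))
  <= Lam ^+ 2 * frob_norm (second_moment P Z).
Proof.
move=> _ dl_le mZ mdl int_sqr_norm.
pose g w t : R := derive1 (l (Y t)) (dotv (Z t) w).
pose a w i := \int[P]_t (Z t i * g w t).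
have int_Zg w i : P.-integrable setT (EFin \o (fun t => Z t i * g w t)) :=
  integrable_mul_of_sqr (mZ i) (mdl w) (integrable_coord_sqr mZ int_sqr_norm i)
    (integrable_bounded_sqr P (mdl w) (fun t => dl_le _ _)).
have bound w : \sum_i a w i ^+ 2 <= Lam ^+ 2 * frob_norm (second_moment P Z).
  exact (sum_sqr_Rintegral_mul_le mZ int_sqr_norm (mdl w) (fun t => dl_le _ _)).
rewrite /dotv (Rintegral_fsum
  (f := fun i tt => Z tt.1 i * g x tt.1 * (Z tt.2 i * g x' tt.2))); last first.
  by move=> i; exact: integrable_prod_mul (int_Zg x i) (int_Zg x' i).
rewrite (eq_bigr (fun i => a x i * a x' i)); last first.
  by move=> i _; exact: Rintegral_prod_mul (int_Zg x i) (int_Zg x' i).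
have amgm (u v : 'I_n -> R) :
    2 * \sum_i u i * v i <= \sum_i u i ^+ 2 + \sum_i v i ^+ 2.
  rewrite mulr_sumr -big_split /=; apply: ler_sum => i _.
  by have := sqr_ge0 (u i - v i); rewrite !expr2; lra.
have := amgm (a x) (a x'); have := bound x; have := bound x'.
by clearbody g a; lra.
Qed.
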